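(* Let $\mathbb F$ be an infinite field, $\mathbf z=(z_1,\dots,z_m)$ indeterminates, and $L(\mathbf z)\in\mathrm{Ten}_{\mathbb F[\mathbf z]}(n,d)$ a tensor whose entries are polynomials in $\mathbf z$. If $\mathrm{brk}_{\mathbb F}(L(\boldsymbol\beta))\le r$ for all $\boldsymbol\beta\in\mathbb F^m$, then $\mathrm{brk}_{\mathbb F(\mathbf z)}(L(\mathbf z))\le r$ and $\mathrm{brk}_{\overline{\mathbb F(\mathbf z)}}(L(\mathbf z))\le r$.
   Context: For a field $\mathbb L$, $I_{\mathbb L,r}$ is the ideal of polynomials on $\mathrm{Ten}_{\mathbb L}(n,d)=(\mathbb L^n)^{\otimes d}$ vanishing on all tensors of tensor rank $\le r$, and $\mathrm{brk}_{\mathbb L}(T)\le r$ means every polynomial in $I_{\mathbb L,r}$ vanishes at $T$ (i.e., $T$ lies in the Zariski closure of the tensors of rank $\le r$). Tensor rank is the least number of tensors $\mathbf v_1\otimes\cdots\otimes\mathbf v_d$ summing to the tensor. *)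

From HB Require Import structures.
From mathcomp Require Import all_boot all_order all_algebra.
Set Implicit Arguments. Unset Strict Implicit. Unset Printing Implicit Defensive.
Import Order.TTheory GRing.Theory Num.Theory.
Local Open Scope ring_scope.

Inductive pexpr (R V : Type) :=
| PConst of R
| PVar of V
| PAdd of pexpr R V & pexpr R V
| PMul of pexpr R V & pexpr R V
| POpp of pexpr R V.

Fixpoint peval (R V : Type) (S : comNzRingType) (f : R -> S) (a : V -> S)
    (e : pexpr R V) : S :=
  match e with
  | PConst c => f c
  | PVar v => a v
  | PAdd e1 e2 => peval f a e1 + peval f a e2
  | PMul e1 e2 => peval f a e1 * peval f a e2
  | POpp e1 => - peval f a e1
  end.

(* Index set of Ten(n,d) = (L^n)^{(x) d}: multi-indices (i_1,...,i_d). *)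
Definition tidx (n d : nat) := {ffun 'I_d -> 'I_n}.

Definition tensor (L : Type) (n d : nat) := tidx n d -> L.

Definition trank_le (L : fieldType) (n d r : nat) (T : tensor L n d) : Prop :=
  exists v : 'I_r -> 'I_d -> 'I_n -> L,
    forall i : tidx n d, T i = \sum_(s < r) \prod_(k < d) v s k (i k).

Definition brk_le (L : fieldType) (n d r : nat) (T : tensor L n d) : Prop :=
  forall p : pexpr L (tidx n d),
    (forall U : tensor L n d, trank_le r U -> peval id U p = 0) ->
    peval id T p = 0.

(* Rational function field F(z_1,...,z_m) := F(z_1)...(z_m) (iterated). *)
Fixpoint ratfun (F : fieldType) (m : nat) : fieldType :=
  match m with
  | 0 => F
  | m'.+1 => ({fraction {poly ratfun F m'}} : fieldType)
  end.

Fixpoint rf_const (F : fieldType) (m : nat) : F -> ratfun F m :=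
  match m return F -> ratfun F m with
  | 0 => fun c => c
  | m'.+1 => fun c => @FracField.tofrac _ ((rf_const m' c)%:P)
  end.

(* The indeterminate z_i (i < m, 0-based) in F(z). *)
Fixpoint rf_var (F : fieldType) (m : nat) : nat -> ratfun F m :=
  match m return nat -> ratfun F m with
  | 0 => fun _ => 0
  | m'.+1 => fun i =>
      if i == m' then @FracField.tofrac _ 'X
      else @FracField.tofrac _ ((rf_var F m' i)%:P)
  end.

Definition algebraic_over (k K : fieldType) (f : {rmorphism k -> K}) (x : K) :=
  exists2 p : {poly k}, p != 0 & root (map_poly f p) x.

Definition infinite_field (F : fieldType) := forall s : seq F, exists x : F, x \notin s.

From HB Require Import structures.
From mathcomp Require Import all_boot all_order all_algebra.
From Stdlib Require Import Classical.
Import GRing.Theory.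
Local Open Scope ring_scope.
Set Implicit Arguments. Unset Strict Implicit.

(* The whole argument takes place over an arbitrary extension g : F -> K.
   A polynomial p over K vanishing on all K-tensors of rank <= r vanishes in
   particular on the F-tensors of rank <= r.  Expanding p as a K-combination
   of polynomials over F, the F-linear space of coefficient vectors that give
   polynomials vanishing on these F-points is determined by finitely many of
   them, hence stays the solution space after base change to K; so p is a
   K-combination of polynomials Q_j over F vanishing on the F-tensors of rank
   <= r.  By hypothesis each Q_j o L then vanishes on all of F^m, hence, F
   being infinite, it is the zero polynomial and vanishes on K^m as well. *)

Section PexprEval.
Variables (R V : Type) (S : comNzRingType).

Lemma peval_ext (f1 f2 : R -> S) (a1 a2 : V -> S) (e : pexpr R V) :
  f1 =1 f2 -> a1 =1 a2 -> peval f1 a1 e = peval f2 a2 e.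
Proof. by move=> hf ha; elim: e => /= [c|v|e1 -> e2 ->|e1 -> e2 ->|e1 ->]. Qed.

Lemma peval_morph (S' : comNzRingType) (h : {rmorphism S -> S'})
    (f : R -> S) (a : V -> S) (e : pexpr R V) :
  h (peval f a e) = peval (h \o f) (h \o a) e.
Proof.
elim: e => /= [c|v|e1 IH1 e2 IH2|e1 IH1 e2 IH2|e1 IH1] //.
- by rewrite rmorphD IH1 IH2.
- by rewrite rmorphM IH1 IH2.
- by rewrite rmorphN IH1.
Qed.

Fixpoint psubst (W : Type) (s : V -> pexpr R W) (e : pexpr R V) : pexpr R W :=
  match e with
  | PConst c => PConst W c
  | PVar v => s v
  | PAdd e1 e2 => PAdd (psubst s e1) (psubst s e2)
  | PMul e1 e2 => PMul (psubst s e1) (psubst s e2)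
  | POpp e1 => POpp (psubst s e1)
  end.

Lemma peval_subst (W : Type) (f : R -> S) (a : W -> S) (s : V -> pexpr R W)
    (e : pexpr R V) :
  peval f a (psubst s e) = peval f (fun v => peval f a (s v)) e.
Proof. by elim: e => /= [c|v|e1 -> e2 ->|e1 -> e2 ->|e1 ->]. Qed.

End PexprEval.

Definition plincomb (R : nmodType) (V : Type) (k : nat)
    (b : 'I_k -> R) (t : 'I_k -> pexpr R V) : pexpr R V :=
  \big[@PAdd R V/PConst V 0]_(l < k) PMul (PConst V (b l)) (t l).

Lemma peval_lincomb (R : nmodType) (V : Type) (S : comNzRingType) (f : R -> S)
    (a : V -> S) (k : nat) (b : 'I_k -> R) (t : 'I_k -> pexpr R V) :
  f 0 = 0 -> peval f a (plincomb b t) = \sum_(l < k) f (b l) * peval f a (t l).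
Proof.
move=> f0; have pf0 : peval f a (PConst V 0) = 0 by [].
by rewrite (big_morph (peval f a) (fun _ _ => erefl) pf0).
Qed.

Section PolynomialIdentity.
Variables (F K : fieldType) (g : {rmorphism F -> K}).
Hypothesis F_infinite : infinite_field F.

Lemma infinite_field_uniq_seq (k : nat) : exists s : seq F, uniq s /\ size s = k.
Proof.
elim: k => [|k [s [s_uniq s_size]]]; first by exists [::].
have [x x_new] := F_infinite s.
by exists (x :: s); rewrite /= x_new s_uniq s_size.
Qed.

Lemma poly_eq0_on_base (q : {poly K}) : (forall y : F, q.[g y] = 0) -> q = 0.
Proof.
move=> q0; have [s [s_uniq s_size]] := infinite_field_uniq_seq (size q).
apply: (@roots_geq_poly_eq0 _ _ (map g s)).
- by apply/allP => _ /mapP[y _ ->]; apply/rootP.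
- by rewrite map_inj_uniq //; apply: fmorph_inj.
- by rewrite size_map s_size.
Qed.

Section Vanishing.
Variables (W : finType) (e : pexpr F W).
Hypothesis e0 : forall a : W -> F, peval id a e = 0.

(* Induction on the variables xs allowed to take arbitrary values in K: with
   the others fixed, e is a polynomial in x over K vanishing on g(F). *)
Lemma peval_eq0_base_change_on (xs : seq W) (a0 : W -> F) (a : W -> K) :
  (forall w, w \notin xs -> a w = g (a0 w)) -> peval g a e = 0.
Proof.
elim: xs a0 a => [|x xs IH] a0 a a_base.
  have -> : peval g a e = peval (g \o id) (g \o a0) e.
    by apply: peval_ext => // w; apply: a_base.
  by rewrite -peval_morph e0 rmorph0.
pose a_at z w := if w == x then z else a w.
pose P := peval (fun c => (g c)%:P) (fun w => if w == x then 'X else (a w)%:P) e.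
have P_horner z : P.[z] = peval g (a_at z) e.
  rewrite /P -horner_evalE peval_morph; apply: peval_ext => [c|w] /=.
    by rewrite horner_evalE hornerC.
  by rewrite /a_at horner_evalE; case: eqP => _; rewrite ?hornerX ?hornerC.
have P0 : P = 0.
  apply: poly_eq0_on_base => y; rewrite P_horner.
  apply: (IH (fun w => if w == x then y else a0 w)) => w w_xs.
  rewrite /a_at; case: eqP => // /eqP w_x; apply: a_base.
  by rewrite in_cons negb_or w_x.
have := P_horner (a x); rewrite P0 horner0 => ->.
by apply: peval_ext => // w; rewrite /a_at; case: eqP => [->|].
Qed.

Lemma peval_eq0_base_change (a : W -> K) : peval g a e = 0.
Proof.
apply: (@peval_eq0_base_change_on (enum W) (fun _ => 0)) => w.
by rewrite mem_enum.
Qed.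

End Vanishing.
End PolynomialIdentity.

Section Decomposition.
Variables (F K : comNzRingType) (g : {rmorphism F -> K}) (V : Type).

Fixpoint base_terms (p : pexpr K V) : seq (K * pexpr F V) :=
  match p with
  | PConst c => [:: (c, PConst V 1)]
  | PVar v => [:: (1, PVar F v)]
  | PAdd p1 p2 => base_terms p1 ++ base_terms p2
  | PMul p1 p2 => [seq (x.1.1 * x.2.1, PMul x.1.2 x.2.2) |
                    x <- [seq (y, z) | y <- base_terms p1, z <- base_terms p2]]
  | POpp p1 => [seq (- x.1, x.2) | x <- base_terms p1]
  end.

Lemma peval_base_terms (p : pexpr K V) (a : V -> K) :
  peval id a p = \sum_(x <- base_terms p) x.1 * peval g a x.2.
Proof.
elim: p => /= [c|v|p1 IH1 p2 IH2|p1 IH1 p2 IH2|p1 IH1].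
- by rewrite big_seq1 /= rmorph1 mulr1.
- by rewrite big_seq1 /= mul1r.
- by rewrite big_cat IH1 IH2.
- rewrite big_map big_allpairs IH1 IH2 mulr_suml; apply: eq_bigr => x _.
  by rewrite mulr_sumr; apply: eq_bigr => y _ /=; rewrite mulrACA.
- by rewrite big_map IH1 -sumrN; apply: eq_bigr => x _; rewrite mulNr.
Qed.

Lemma pexpr_decomp (p : pexpr K V) :
  exists k (c : 'I_k -> K) (t : 'I_k -> pexpr F V),
    forall a : V -> K, peval id a p = \sum_(l < k) c l * peval g a (t l).
Proof.
pose x0 : K * pexpr F V := (0, PConst V 0).
exists (size (base_terms p)), (fun l => (nth x0 (base_terms p) l).1),
  (fun l => (nth x0 (base_terms p) l).2) => a.
by rewrite peval_base_terms (big_nth x0) big_mkord.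
Qed.

End Decomposition.

Section Annihilator.
Variables (F : fieldType) (k : nat) (I : Type) (u : I -> 'cV[F]_k).

Fixpoint cols_mx (S : seq I) : 'M[F]_(k, size S) :=
  match S with
  | [::] => 0
  | i :: S' => row_mx (u i) (cols_mx S')
  end.

Lemma mul_cols_mx_cons_eq0 (q : nat) (B : 'M_(q, k)) (i : I) (S : seq I) :
  (B *m cols_mx (i :: S) == 0) = (B *m u i == 0) && (B *m cols_mx S == 0).
Proof.
change (B *m cols_mx (i :: S) == 0) with (B *m row_mx (u i) (cols_mx S) == 0).
by rewrite mul_mx_row row_mx_eq0.
Qed.

Lemma rank_kermx_cols_mx_cons (S : seq I) (i : I) (b : 'rV_k) :
  b *m cols_mx S = 0 -> b *m u i != 0 ->
  (\rank (kermx (cols_mx (i :: S))) < \rank (kermx (cols_mx S)))%N.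
Proof.
move=> bS bi; apply: rank_ltmx; rewrite ltmxE; apply/andP; split.
  apply/sub_kermxP/eqP.
  have /eqP := mulmx_ker (cols_mx (i :: S)).
  by rewrite mul_cols_mx_cons_eq0 => /andP[].
have bK : (b <= kermx (cols_mx S))%MS by apply/sub_kermxP.
apply: contra bi => /(submx_trans bK)/sub_kermxP/eqP.
by rewrite mul_cols_mx_cons_eq0 => /andP[].
Qed.

Definition cols_test (S : seq I) :=
  forall b : 'rV_k, b *m cols_mx S = 0 -> forall i, b *m u i = 0.

Lemma cols_test_or_shrink (S : seq I) : cols_test S \/
  exists i, (\rank (kermx (cols_mx (i :: S))) < \rank (kermx (cols_mx S)))%N.
Proof.
have [[b [i [bS bi]]]|no_witness] :=
  classic (exists (b : 'rV_k) i, b *m cols_mx S = 0 /\ b *m u i != 0).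
  by right; exists i; exact: rank_kermx_cols_mx_cons bS bi.
left=> b bS i; apply/eqP/contraT => bi.
by case: no_witness; exists b, i.
Qed.

Lemma finite_cols_test : exists S, cols_test S.
Proof.
suff /(_ k [::] (rank_leq_row _)) : forall N S,
  (\rank (kermx (cols_mx S)) <= N)%N -> exists S', cols_test S' by [].
elim=> [|N IH] S rkS; have [|[i lt_rk]] := cols_test_or_shrink S; try by exists S.
  by move: (leq_trans lt_rk rkS).
by apply: (IH (i :: S)); rewrite -ltnS (leq_trans lt_rk rkS).
Qed.

Lemma annihilator_base_change :
  exists B : 'M[F]_k, (forall i, B *m u i = 0) /\
    forall (K : fieldType) (g : {rmorphism F -> K}) (c : 'rV[K]_k),
      (forall i, c *m map_mx g (u i) = 0) -> (c <= map_mx g B)%MS.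
Proof.
have [S S_test] := finite_cols_test.
exists (kermx (cols_mx S)); split=> [i | K g c cu].
  apply/row_matrixP => j; rewrite row_mul row0; apply: S_test.
  by rewrite -row_mul mulmx_ker row0.
rewrite map_kermx; apply/sub_kermxP.
elim: S {S_test} => [|i S IH]; first by rewrite /= map_mx0 mulmx0.
change (c *m map_mx g (row_mx (u i) (cols_mx S)) = 0).
by rewrite map_row_mx mul_mx_row cu IH row_mx0.
Qed.

End Annihilator.

Lemma vanishing_pexpr_span (F K : fieldType) (g : {rmorphism F -> K})
    (V I : Type) (P : I -> V -> F) (p : pexpr K V) :
  (forall i, peval id (g \o P i) p = 0) ->
  exists q (Q : 'I_q -> pexpr F V) (x : 'I_q -> K),
    (forall j i, peval id (P i) (Q j) = 0) /\
    forall a : V -> K, peval id a p = \sum_(j < q) x j * peval g a (Q j).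
Proof.
move=> p0; have [k [c [t pE]]] := pexpr_decomp g p.
pose u i : 'cV[F]_k := \col_l peval id (P i) (t l).
have [B [Bu B_base]] := annihilator_base_change u.
have /submxP [x cE] : (\row_l c l <= map_mx g B)%MS.
  apply: B_base => i; apply/matrixP => ? ?; rewrite !ord1 !mxE -[RHS](p0 i) pE.
  apply: eq_bigr => l _; rewrite !mxE peval_morph.
  by congr (_ * _); apply: peval_ext.
exists k, (fun j => plincomb (B j) t), (fun j => x 0 j); split=> [j i | a].
  rewrite peval_lincomb //; transitivity ((B *m u i) j 0); last by rewrite Bu mxE.
  by rewrite mxE; apply: eq_bigr => l _; rewrite mxE.
have c_comb l : c l = \sum_(j < k) x 0 j * g (B j l).
  have := congr1 (fun M : 'rV[K]_k => M 0 l) cE; rewrite !mxE => ->.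
  by apply: eq_bigr => j _; rewrite mxE.
rewrite pE; under eq_bigr => l _ do rewrite c_comb big_distrl.
rewrite exchange_big; apply: eq_bigr => j _ /=.
rewrite peval_lincomb ?rmorph0 // mulr_sumr.
by apply: eq_bigr => l _; rewrite mulrA.
Qed.

Lemma trank_le_map (F K : fieldType) (g : {rmorphism F -> K}) (n d r : nat)
    (T : tensor F n d) :
  trank_le r T -> trank_le r (g \o T).
Proof.
case=> v Tv; exists (fun s k i => g (v s k i)) => i /=.
by rewrite Tv rmorph_sum; apply: eq_bigr => s _; rewrite rmorph_prod.
Qed.

Lemma brk_le_base_change (F K : fieldType) (g : {rmorphism F -> K})
    (W : finType) (n d r : nat) (L : tidx n d -> pexpr F W) :
  infinite_field F ->
  (forall beta : W -> F, brk_le r (fun i => peval id beta (L i))) ->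
  forall gam : W -> K, brk_le r (fun i => peval g gam (L i)).
Proof.
move=> F_infinite brk_L gam p p0.
have [q [Q [x [Q0 ->]]]] := vanishing_pexpr_span (P := sval)
  (fun T : {T : tensor F n d | trank_le r T} => p0 _ (trank_le_map g (svalP T))).
apply: big1 => j _; rewrite -peval_subst peval_eq0_base_change ?mulr0 //.
move=> beta; rewrite peval_subst; apply: brk_L => T rT.
exact: (Q0 j (exist _ T rT)).
Qed.

Lemma rf_const_zmod (F : fieldType) (m : nat) : zmod_morphism (@rf_const F m).
Proof. by elim: m => [|m IH] x y //=; rewrite IH polyCB rmorphB. Qed.

Lemma rf_const_monoid (F : fieldType) (m : nat) : monoid_morphism (@rf_const F m).
Proof.
split; first by elim: m => [|m IH] //=; rewrite IH polyC1 rmorph1.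
by elim: m => [|m IH] x y //=; rewrite IH polyCM rmorphM.
Qed.

HB.instance Definition _ (F : fieldType) (m : nat) :=
  GRing.isZmodMorphism.Build F (ratfun F m) (@rf_const F m) (@rf_const_zmod F m).
HB.instance Definition _ (F : fieldType) (m : nat) :=
  GRing.isMonoidMorphism.Build F (ratfun F m) (@rf_const F m)
    (@rf_const_monoid F m).

Theorem corollaryA2 (F : fieldType) (m n d r : nat)
  (L : tidx n d -> pexpr F 'I_m) :
  infinite_field F ->
  (forall beta : 'I_m -> F, brk_le r (fun i => peval id beta (L i))) ->
  brk_le r (fun i => peval (@rf_const F m) (fun j : 'I_m => rf_var F m j) (L i))
  /\
  (forall (K : closedFieldType) (f : {rmorphism ratfun F m -> K}),
     (forall x : K, algebraic_over f x) ->
     brk_le r (fun i => f (peval (@rf_const F m) (fun j : 'I_m => rf_var F m j) (L i)))).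
Proof.
move=> F_infinite brk_L; split.
  exact: (brk_le_base_change (@rf_const F m : {rmorphism F -> ratfun F m})).
move=> K f _ p p0; rewrite -(brk_le_base_change
  (f \o (@rf_const F m : {rmorphism F -> ratfun F m})) F_infinite brk_L
  (f \o rf_var F m) p0).
by apply: peval_ext => // i; rewrite peval_morph.
Qed.
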